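(* Let $(\mathfrak{A},\varphi,\tau)$ be a $*$-dynamical system, and let $A\in\mathfrak{A}$ and $\varepsilon>0$. Then the set $$E=\left\{k\in\mathbb{N}:\left|\varphi\left(A^*\tau^k(A)\right)\right|>\left|\varphi(A)\right|^2-\varepsilon\right\}$$ is relatively dense in $\mathbb{N}=\{1,2,3,\dots\}$.
   Context: All algebras are over $\mathbb{C}$. A unital $*$-algebra is a complex algebra with an involution $*$ and a unit $1$. A state on a unital $*$-algebra $\mathfrak{A}$ is a linear functional $\varphi$ with $\varphi(A^*A)\ge0$ for all $A$ and $\varphi(1)=1$. A $*$-dynamical system is a triple $(\mathfrak{A},\varphi,\tau)$ where $\mathfrak{A}$ is a unital $*$-algebra, $\varphi$ a state on $\mathfrak{A}$, and $\tau:\mathfrak{A}\to\mathfrak{A}$ a linear map (not necessarily multiplicative) with $\tau(1)=1$ and $\varphi(\tau(A)^*\tau(A))\le\varphi(A^*A)$ for all $A\in\mathfrak{A}$. A set $E\subseteq\mathbb{N}$ is relatively dense in $\mathbb{N}$ if there exists $n\in\mathbb{N}$ such that $E\cap\{j,\dots,j+n-1\}\neq\emptyset$ for every $j\in\mathbb{N}$. *)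

From HB Require Import structures.
From mathcomp Require Import all_boot all_order all_algebra.
From mathcomp Require Import complex reals.
Set Implicit Arguments. Unset Strict Implicit. Unset Printing Implicit Defensive.
Import Order.TTheory GRing.Theory Num.Theory.
Local Open Scope ring_scope.

Definition is_involution (R : realType) (A : algType R[i]) (star : A -> A) : Prop :=
  [/\ forall x y : A, star (x + y) = star x + star y,
      forall (a : R[i]) (x : A), star (a *: x) = (Num.conj a) *: star x,
      forall x y : A, star (x * y) = star y * star x
    & forall x : A, star (star x) = x].

Definition is_state (R : realType) (A : algType R[i]) (star : A -> A)
  (phi : A -> R[i]) : Prop :=
  [/\ forall (a : R[i]) (x y : A), phi (a *: x + y) = a * phi x + phi y,
      forall x : A, 0 <= phi (star x * x)
    & phi 1 = 1].

Definition is_dynamics (R : realType) (A : algType R[i]) (star : A -> A)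
  (phi : A -> R[i]) (tau : A -> A) : Prop :=
  [/\ forall (a : R[i]) (x y : A), tau (a *: x + y) = a *: tau x + tau y,
      tau 1 = 1
    & forall x : A, phi (star (tau x) * tau x) <= phi (star x * x)].

Definition star_dynamical_system (R : realType) (A : algType R[i]) (star : A -> A)
  (phi : A -> R[i]) (tau : A -> A) : Prop :=
  [/\ is_involution star, is_state star phi & is_dynamics star phi tau].

Definition rel_dense_N (E : nat -> Prop) : Prop :=
  exists n : nat, (0 < n)%N /\
    forall j : nat, (0 < j)%N -> exists k : nat, (j <= k < j + n)%N /\ E k.

From HB Require Import structures.
From mathcomp Require Import all_boot all_order all_algebra.
From mathcomp Require Import complex reals classical_sets ring lra.
Import Order.TTheory GRing.Theory Num.Theory.
Local Open Scope ring_scope.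

Set Implicit Arguments. Unset Strict Implicit.

(* The form <u, v> := Re phi(u^* v) is a real semi-inner product on A for which
   tau is a linear contraction, and e := phi(A) 1 is a fixed vector with
   <e, e> = <e, A> = |phi(A)|^2.  Take x in the convex hull of the orbit
   {tau^i A} of almost minimal norm (the argument behind the mean ergodic
   theorem, which needs no completeness): every tau^j x is then close to x, and
   since e is also fixed by the adjoint of tau, <A, tau^j x> >= <e, A> - 3 eta.
   Writing x = sum_{i<n} l_i tau^i A as a convex combination,
   <A, tau^M x> = sum_i l_i <A, tau^(M+i) A>, so for every M some i < n
   satisfies <A, tau^(M+i) A> > |phi(A)|^2 - eps. *)

Lemma discriminant_le (R : realFieldType) (a b c : R) :
  0 <= b -> (forall t, 0 <= a - 2 * t * c + t ^+ 2 * b) -> c ^+ 2 <= a * b.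
Proof.
move=> b_ge0 quad_ge0; have a_ge0 : 0 <= a by have := quad_ge0 0; lra.
have [b0 | b_neq0] := eqVneq b 0.
  rewrite b0 mulr0; have [-> | c_neq0] := eqVneq c 0; first by rewrite expr0n.
  have := quad_ge0 ((a + 1) / (2 * c)); rewrite b0 mulr0 addr0.
  have -> : 2 * ((a + 1) / (2 * c)) * c = a + 1 by field.
  lra.
have b_gt0 : 0 < b by rewrite lt_def b_neq0.
have := mulr_ge0 b_ge0 (quad_ge0 (c / b)).
have -> : b * (a - 2 * (c / b) * c + (c / b) ^+ 2 * b) = a * b - c ^+ 2 by field.
lra.
Qed.

Lemma normr_le_of_sqr_le (R : realDomainType) (x c : R) :
  0 <= c -> x ^+ 2 <= c ^+ 2 -> `|x| <= c.
Proof.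
by move=> c_ge0 le_sq; rewrite -ler_sqr ?nnegrE ?normr_ge0 //= real_normK ?num_real.
Qed.

Lemma convex_comb_le (R : realDomainType) n (l f : nat -> R) c :
  (forall i, 0 <= l i) -> \sum_(i < n) l i = 1 ->
  (forall i, (i < n)%N -> f i <= c) -> \sum_(i < n) l i * f i <= c.
Proof.
move=> l_ge0 l_sum f_le; rewrite -[c]mul1r -l_sum mulr_suml.
by apply: ler_sum => i _; rewrite ler_wpM2l ?f_le.
Qed.

Lemma exists_gt_convex_comb (R : realDomainType) n (l f : nat -> R) c :
  (forall i, 0 <= l i) -> \sum_(i < n) l i = 1 ->
  c < \sum_(i < n) l i * f i -> exists2 i, (i < n)%N & c < f i.
Proof.
move=> l_ge0 l_sum; have [i c_lt_fi _ | f_le] := pickP (fun i : 'I_n => c < f i).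
  by exists i.
rewrite ltNge (convex_comb_le l_ge0 l_sum) // => i lt_in.
by have := f_le (Ordinal lt_in); rewrite /= leNgt => /negbT.
Qed.

Lemma sum_widen_if (W : nmodType) n N (F : nat -> W) : (n <= N)%N ->
  \sum_(i < N) (if (i < n)%N then F i else 0) = \sum_(i < n) F i.
Proof. by move=> le_nN; rewrite (big_ord_widen _ _ le_nN) [RHS]big_mkcond. Qed.

Lemma exists_near_minimizer (R : realType) (I : Type) (P : I -> Prop) (f : I -> R) d :
  (exists x, P x) -> (forall x, P x -> 0 <= f x) -> 0 < d ->
  exists2 x, P x & forall y, P y -> f x <= f y + d.
Proof.
move=> [x0 Px0] f_ge0 d_gt0.
have infE : has_inf [set f x | x in P].
  by split; [exists (f x0), x0 | exists 0 => _ [x Px <-]; apply: f_ge0].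
have [_ [x Px <-] near] := inf_adherent d_gt0 infE.
exists x => // y Py; suff : inf [set f x | x in P] <= f y by lra.
by apply: (ge_inf infE.2); exists y.
Qed.

Section SemiInnerProduct.
Variables (R : realFieldType) (V : lmodType R).

Record semi_inner_product (ip : V -> V -> R) : Prop := {
  sipDl : forall u v w, ip (u + v) w = ip u w + ip v w;
  sipZl : forall a u w, ip (a *: u) w = a * ip u w;
  sipC : forall u v, ip u v = ip v u;
  sip_ge0 : forall u, 0 <= ip u u }.

Variables (ip : V -> V -> R) (F : semi_inner_product ip).

Lemma sipBl u v w : ip (u - v) w = ip u w - ip v w.
Proof. by rewrite (sipDl F) -scaleN1r (sipZl F) mulN1r. Qed.

Lemma sipDr u v w : ip w (u + v) = ip w u + ip w v.
Proof. by rewrite !(sipC F w) (sipDl F). Qed.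

Lemma sipZr a u w : ip w (a *: u) = a * ip w u.
Proof. by rewrite !(sipC F w) (sipZl F). Qed.

Lemma sipBr u v w : ip w (u - v) = ip w u - ip w v.
Proof. by rewrite !(sipC F w) sipBl. Qed.

Lemma sip0l w : ip 0 w = 0.
Proof. by rewrite -(scale0r 0) (sipZl F) mul0r. Qed.

Lemma sip_suml I (r : seq I) (P : pred I) (f : I -> V) w :
  ip (\sum_(i <- r | P i) f i) w = \sum_(i <- r | P i) ip (f i) w.
Proof. exact: (big_morph (ip^~ w) (fun u v => sipDl F u v w) (sip0l w)). Qed.

Lemma sip_sumr I (r : seq I) (P : pred I) (f : I -> V) w :
  ip w (\sum_(i <- r | P i) f i) = \sum_(i <- r | P i) ip w (f i).
Proof. by rewrite (sipC F) sip_suml; apply: eq_bigr => i _; rewrite (sipC F). Qed.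

Lemma sip_CauchySchwarz u v : ip u v ^+ 2 <= ip u u * ip v v.
Proof.
apply: discriminant_le (sip_ge0 F v) _ => t.
have -> : ip u u - 2 * t * ip u v + t ^+ 2 * ip v v
    = ip (u - t *: v) (u - t *: v).
  by rewrite sipBl !sipBr !(sipZl F) !sipZr (sipC F v u); ring.
exact: sip_ge0.
Qed.

Lemma normr_sip_le u v c :
  0 <= c -> ip u u * ip v v <= c ^+ 2 -> `|ip u v| <= c.
Proof.
by move=> c_ge0 le_c; apply/normr_le_of_sqr_le/(le_trans (sip_CauchySchwarz u v)).
Qed.

Lemma sip_sub_le_of_midpoint x y d :
  ip x x <= ip (2^-1 *: (x + y)) (2^-1 *: (x + y)) + d ->
  ip y y <= ip x x -> ip (y - x) (y - x) <= 4 * d.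
Proof.
have -> : ip (2^-1 *: (x + y)) (2^-1 *: (x + y))
    = (2 * ip x x + 2 * ip y y - ip (y - x) (y - x)) / 4.
  rewrite sipBl !sipBr (sipZl F) sipZr (sipDl F) !sipDr (sipC F y x).
  by field.
lra.
Qed.

End SemiInnerProduct.

Section Contraction.
Variables (R : realFieldType) (V : lmodType R) (ip : V -> V -> R).
Hypothesis F : semi_inner_product ip.
Variable S : V -> V.
Hypothesis S_linear : linear S.
Hypothesis S_contracting : forall u, ip (S u) (S u) <= ip u u.

HB.instance Definition _ := GRing.isLinear.Build R V V *:%R S S_linear.

Lemma defect_sip : semi_inner_product (fun u v => ip u v - ip (S u) (S v)).
Proof.
split=> [u v w | a u w | u v | u].
- by rewrite linearD !(sipDl F); ring.
- by rewrite linearZ !(sipZl F); ring.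
- by rewrite (sipC F u) (sipC F (S u)).
- by rewrite subr_ge0.
Qed.

Lemma contraction_CauchySchwarz u v :
  (ip u v - ip (S u) (S v)) ^+ 2
    <= (ip u u - ip (S u) (S u)) * (ip v v - ip (S v) (S v)).
Proof. exact: (sip_CauchySchwarz defect_sip). Qed.

Lemma ip_fixed_adjoint e u : S e = e -> ip (S u) e = ip u e.
Proof.
(* [e] has zero defect, so Cauchy-Schwarz for the defect form kills [ip u e - ip (S u) e]. *)
move=> Se; have := contraction_CauchySchwarz u e; rewrite Se subrr mulr0 => le0.
by apply/eqP; rewrite eq_sym -subr_eq0 -sqrf_eq0 eq_le le0 sqr_ge0.
Qed.

End Contraction.

Section OrbitHull.
Variables (R : realFieldType) (V : lmodType R) (T : V -> V).
Hypothesis T_linear : linear T.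

HB.instance Definition _ := GRing.isLinear.Build R V V *:%R T T_linear.

Definition in_orbit_hull (a x : V) : Prop :=
  exists n (l : nat -> R), [/\ forall i, 0 <= l i, \sum_(i < n) l i = 1
                             & x = \sum_(i < n) l i *: iter i T a].

Lemma linear_iter j : linear (iter j T).
Proof. by elim: j => [|j IH] a u v //=; rewrite IH linearP. Qed.

Lemma iter_orbit_comb M n (l : nat -> R) a :
  iter M T (\sum_(i < n) l i *: iter i T a) = \sum_(i < n) l i *: iter (M + i) T a.
Proof.
elim: M => [|M IH] //=; rewrite IH linear_sum.
by apply: eq_bigr => i _; rewrite linearZ.
Qed.

Lemma orbit_hull_self a : in_orbit_hull a a.
Proof. by exists 1%N, (fun=> 1); split; rewrite ?big_ord1 ?scale1r. Qed.

Lemma orbit_hull_T a x : in_orbit_hull a x -> in_orbit_hull a (T x).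
Proof.
case=> n [l [l_ge0 l_sum ->]].
exists n.+1, (fun i => if i is k.+1 then l k else 0); split => [[]//||].
  by rewrite big_ord_recl add0r.
by rewrite big_ord_recl scale0r add0r; exact: (iter_orbit_comb 1).
Qed.

Lemma orbit_hull_iter j a x : in_orbit_hull a x -> in_orbit_hull a (iter j T x).
Proof. by move=> hull_x; elim: j => //= j; apply: orbit_hull_T. Qed.

Lemma orbit_hull_midpoint a x y :
  in_orbit_hull a x -> in_orbit_hull a y -> in_orbit_hull a (2^-1 *: (x + y)).
Proof.
case=> n [l [l_ge0 l_sum ->]]; case=> m [k [k_ge0 k_sum ->]].
pose c n' (l' : nat -> R) i := if (i < n')%N then l' i else 0.
have c_ge0 n' l' i : (forall i, 0 <= l' i) -> 0 <= c n' l' i.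
  by rewrite /c; case: ifP.
exists (n + m)%N, (fun i => 2^-1 * (c n l i + c m k i)); split.
- by move=> i; rewrite mulr_ge0 ?addr_ge0 ?invr_ge0 ?c_ge0.
- rewrite -mulr_sumr big_split /= !sum_widen_if ?leq_addr ?leq_addl //.
  by rewrite l_sum k_sum -[1 + 1]/(2%:R) mulVf ?pnatr_eq0.
rewrite -(sum_widen_if (fun i => l i *: iter i T a) (leq_addr m n)).
rewrite -(sum_widen_if (fun i => k i *: iter i T a) (leq_addl n m)).
rewrite -big_split scaler_sumr; apply: eq_bigr => i _.
by rewrite -scalerA scalerDl /c; case: ifP; case: ifP; rewrite ?scale0r.
Qed.

End OrbitHull.

Section Iterates.
Variables (R : realFieldType) (V : lmodType R) (ip : V -> V -> R) (T : V -> V).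
Hypothesis F : semi_inner_product ip.
Hypothesis T_linear : linear T.
Hypothesis T_contracting : forall u, ip (T u) (T u) <= ip u u.

Lemma iter_contracting j u : ip (iter j T u) (iter j T u) <= ip u u.
Proof. by elim: j => [|j IH] /=; [exact: lexx | exact: le_trans (T_contracting _) IH]. Qed.

Lemma iter_CauchySchwarz j u v :
  (ip u v - ip (iter j T u) (iter j T v)) ^+ 2
    <= (ip u u - ip (iter j T u) (iter j T u))
       * (ip v v - ip (iter j T v) (iter j T v)).
Proof. exact: (contraction_CauchySchwarz F (linear_iter T_linear j) (iter_contracting j)). Qed.

Lemma ip_iter_fixed e j u : T e = e -> ip (iter j T u) e = ip u e.
Proof.
by move=> Te; elim: j => //= j <-; apply: (ip_fixed_adjoint F T_linear T_contracting).
Qed.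

Definition almost_invariant d x := forall j,
  ip x x - ip (iter j T x) (iter j T x) <= d
  /\ ip (iter j T x - x) (iter j T x - x) <= 4 * d.

Variables (a e : V).
Hypothesis Te : T e = e.
Hypothesis e_proj : ip e e = ip e a.

Lemma orbit_hull_ip_fixed x : in_orbit_hull T a x -> ip e x = ip e a.
Proof.
case=> n [l [_ l_sum ->]]; rewrite (sip_sumr F).
under eq_bigr => i _ do rewrite (sipZr F) (sipC F) ip_iter_fixed // (sipC F).
by rewrite -mulr_suml l_sum mul1r.
Qed.

Lemma orbit_hull_norm_ge x : in_orbit_hull T a x -> ip e a <= ip x x.
Proof.
move=> hull_x; have := sip_CauchySchwarz F e x.
rewrite orbit_hull_ip_fixed // e_proj.
have := sip_ge0 F x; have := sip_ge0 F e; rewrite e_proj; nra.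
Qed.

Lemma orbit_hull_ip_le x y c : in_orbit_hull T a y ->
  (forall i, ip (iter i T a) x <= c) -> ip y x <= c.
Proof.
case=> n [l [l_ge0 l_sum ->]] le_c; rewrite (sip_suml F).
under eq_bigr => i _ do rewrite (sipZl F).
by apply: (convex_comb_le (f := fun i => ip (iter i T a) x)) => // i _.
Qed.

Lemma orbit_hull_lower_bound x d eta :
  in_orbit_hull T a x -> almost_invariant d x ->
  0 <= eta -> ip a a * (4 * d) <= eta ^+ 2 ->
  forall j, ip e a - 3 * eta <= ip a (iter j T x).
Proof.
move=> hull_x almost eta_ge0 small j.
have d_ge0 : 0 <= d by have [+ _] := almost 0%N; rewrite subrr.
have near_x i v : ip v v <= ip a a -> `|ip v (iter i T x - x)| <= eta.
  move=> le_v; apply: (normr_sip_le F) eta_ge0 _; apply: le_trans small.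
  by apply: ler_pM; rewrite ?sip_ge0 // (almost i).2.
have near_iter i : `|ip a x - ip (iter i T a) (iter i T x)| <= eta.
  apply: normr_le_of_sqr_le eta_ge0 (le_trans (iter_CauchySchwarz i a x) _).
  apply: le_trans small; have [le_d _] := almost i.
  have := iter_contracting i a; have := iter_contracting i x.
  by have := sip_ge0 F (iter i T a) => ? ? ?; apply: ler_pM; lra.
have norm_x_le : ip x x <= ip a x + 2 * eta.
  apply: (orbit_hull_ip_le hull_x) => i.
  move: (near_iter i) (near_x i _ (iter_contracting i a)); rewrite (sipBr F).
  by move=> /ler_normlP [? ?] /ler_normlP [? ?]; lra.
have := near_x j a (lexx _); rewrite (sipBr F) => /ler_normlP [? ?].
have := orbit_hull_norm_ge hull_x; lra.
Qed.

End Iterates.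

Section Recurrence.
Variables (R : realType) (V : lmodType R) (ip : V -> V -> R) (T : V -> V).
Hypothesis F : semi_inner_product ip.
Hypothesis T_linear : linear T.
Hypothesis T_contracting : forall u, ip (T u) (T u) <= ip u u.

Lemma exists_almost_invariant a d : 0 < d ->
  exists2 x, in_orbit_hull T a x & almost_invariant ip T d x.
Proof.
move=> d_gt0.
have [x hull_x near_min] := exists_near_minimizer (f := fun x => ip x x)
  (ex_intro _ a (orbit_hull_self T a)) (fun x _ => sip_ge0 F x) d_gt0.
exists x => // j; have hull_jx := orbit_hull_iter T_linear j hull_x; split.
  by have := near_min _ hull_jx; lra.
apply: (sip_sub_le_of_midpoint F); last exact: iter_contracting.
exact/near_min/orbit_hull_midpoint.
Qed.

Theorem contraction_recurrence a e eps : T e = e -> ip e e = ip e a -> 0 < eps ->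
  exists n, (0 < n)%N /\
    forall M, exists2 i, (i < n)%N & ip e a - eps < ip a (iter (M + i) T a).
Proof.
move=> Te e_proj eps_gt0; pose eta := eps / 4.
pose d := eta ^+ 2 / (4 * ip a a + 1).
have Q_ge0 := sip_ge0 F a.
have d_gt0 : 0 < d by rewrite divr_gt0 ?exprn_gt0 ?divr_gt0 //; lra.
have small : ip a a * (4 * d) <= eta ^+ 2.
  rewrite /d mulrA mulrA ler_pdivrMr; last lra.
  by have := sqr_ge0 eta; nra.
have eta_ge0 : 0 <= eta by rewrite /eta; lra.
have [x hull_x almost] := exists_almost_invariant a d_gt0.
have lower := orbit_hull_lower_bound F T_linear T_contracting Te e_proj
  hull_x almost eta_ge0 small.
case: (hull_x) => n [l [l_ge0 l_sum x_def]].
exists n; split.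
  by case: n {x_def} l_sum => //; rewrite big_ord0 => /esym/eqP; rewrite oner_eq0.
(* [ip a (iter M T x)] is an [l]-average of the [ip a (iter (M + i) T a)], [i < n]. *)
move=> M; apply: (exists_gt_convex_comb l_ge0 l_sum).
have := lower M; rewrite x_def iter_orbit_comb // (sip_sumr F).
under eq_bigr => i _ do rewrite (sipZr F).
rewrite /eta; lra.
Qed.

End Recurrence.

Local Open Scope complex_scope.

Section RealScalars.
Variables (R : rcfType) (V : lmodType R[i]).

Definition real_lmod : Type := V.

HB.instance Definition _ := GRing.Zmodule.on real_lmod.

Let real_scale (s : R) (v : real_lmod) : real_lmod := s%:C *: (v : V).

Fact real_scaleA a b v : real_scale a (real_scale b v) = real_scale (a * b) v.
Proof. by rewrite /real_scale scalerA rmorphM. Qed.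
Fact real_scale1 : left_id 1 real_scale.
Proof. by move=> v; rewrite /real_scale scale1r. Qed.
Fact real_scaleDr : right_distributive real_scale +%R.
Proof. by move=> a u v; rewrite /real_scale scalerDr. Qed.
Fact real_scaleDl v : {morph real_scale^~ v : a b / a + b}.
Proof. by move=> a b; rewrite /real_scale rmorphD scalerDl. Qed.

HB.instance Definition _ := GRing.Zmodule_isLmodule.Build R real_lmod
  real_scaleA real_scale1 real_scaleDr real_scaleDl.

Lemma linear_real_lmod (f : V -> V) : linear f -> linear (f : real_lmod -> real_lmod).
Proof. by move=> f_linear s; apply: f_linear. Qed.

End RealScalars.

Lemma Re_mul_real (R : rcfType) (s : R) (z : R[i]) :
  complex.Re (s%:C * z) = s * complex.Re z.
Proof. by case: z => x y /=; rewrite mul0r subr0. Qed.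

Lemma ltc_normc (R : rcfType) (r : R) (z : R[i]) : r < complex.Re z -> r%:C < `|z|.
Proof.
move=> lt_rz; apply: lt_le_trans (normc_ge_Re z).
by rewrite ltcR (lt_le_trans lt_rz (ler_norm _)).
Qed.

Section StateForm.
Variables (R : realType) (A : algType R[i]) (star : A -> A) (phi : A -> R[i]).
Hypothesis star_involution : is_involution star.
Hypothesis phi_state : is_state star phi.

Fact phi_scalar : scalar phi. Proof. by case: phi_state. Qed.
HB.instance Definition _ := GRing.isLinear.Build R[i] A R[i] *%R phi phi_scalar.

Definition state_form (u v : real_lmod A) : R := complex.Re (phi (star u * v)).

Lemma star1 : star 1 = 1.
Proof.
case: star_involution => _ _ starM starK.
by have := starM (star 1) 1; rewrite mulr1 starK mulr1 => <-.
Qed.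

Lemma state_form_sip : semi_inner_product state_form.
Proof.
case: star_involution => starD starZ _ _; case: phi_state => _ phi_ge0 _.
split=> [u v w | s u w | u v | u]; rewrite /state_form.
- by rewrite starD mulrDl linearD raddfD.
- by rewrite starZ [Num.conj _](conjc_real s) -scalerAl linearZ Re_mul_real.
- have := ger0_Im (phi_ge0 (u + 'i *: v)).
  rewrite starD starZ mulrDl !mulrDr -!scalerAl -!scalerAr scalerA !linearD !linearZ /=.
  move: (ger0_Im (phi_ge0 u)) (ger0_Im (phi_ge0 v)).
  case: (phi (star u * u)) => ? ?; case: (phi (star u * v)) => ? ?.
  case: (phi (star v * u)) => ? ?; case: (phi (star v * v)) => ? ? /=.
  lra.
- by have := phi_ge0 u; rewrite lecE => /andP [].
Qed.

Lemma state_form_scale1 c v : state_form (c *: 1) v = complex.Re (c^* * phi v).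
Proof.
case: star_involution => _ starZ _ _.
by rewrite /state_form starZ star1 -scalerAl mul1r linearZ.
Qed.

Lemma state_form_expect_self a :
  state_form (phi a *: 1) (phi a *: 1) = state_form (phi a *: 1) a.
Proof.
case: phi_state => _ _ phi1.
by rewrite !state_form_scale1 linearZ /= phi1 mulr1.
Qed.

Lemma state_form_expect a : (state_form (phi a *: 1) a)%:C = `|phi a| ^+ 2.
Proof.
rewrite state_form_scale1 sqr_normc; case: (phi a) => x y /=.
by apply/eqP; rewrite eq_complex /=; apply/andP; split; apply/eqP; ring.
Qed.

Lemma state_form_contracting (tau : A -> A) :
  (forall x, phi (star (tau x) * tau x) <= phi (star x * x)) ->
  forall u, state_form (tau u) (tau u) <= state_form u u.
Proof. by move=> tau_contr u; have := tau_contr u; rewrite lecE => /andP []. Qed.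

End StateForm.

Theorem theorem4p1 (R : realType) (A : algType R[i]) (star : A -> A)
  (phi : A -> R[i]) (tau : A -> A) (a : A) (eps : R[i]) :
  star_dynamical_system star phi tau -> 0 < eps ->
  rel_dense_N (fun k : nat => (0 < k)%N /\
     `|phi a| ^+ 2 - eps < `|phi (star a * iter k tau a)|).
Proof.
case=> star_involution phi_state [tau_linear tau1 tau_contracting].
case: eps => eps im; rewrite ltcE /= => /andP [/eqP -> eps_gt0].
have tau_e : tau (phi a *: 1) = phi a *: 1.
  by rewrite (scalable_linear tau_linear) tau1.
have [n [n_gt0 recurrent]] := contraction_recurrence
  (state_form_sip star_involution phi_state) (linear_real_lmod tau_linear)
  (state_form_contracting tau_contracting) tau_e
  (state_form_expect_self star_involution phi_state a) eps_gt0.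
exists n; split => // j j_gt0; have [i lt_in lt_ji] := recurrent j.
exists (j + i)%N; split; first by rewrite leq_addr ltn_add2l.
split; first by rewrite addn_gt0 j_gt0.
by rewrite complexr0 -(state_form_expect star_involution phi_state) -rmorphB ltc_normc.
Qed.
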